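(* There exist nested $(v,4,1)$-BIBDs for all $v\equiv 4\pmod{12}$ with $16\le v\le 196$.
   Context: A $(v,k,\lambda)$-BIBD is a set $X$ of $v$ points with a multiset $\mathcal{A}$ of $k$-subsets (blocks) such that every pair of distinct points lies in exactly $\lambda$ blocks; a partial $(v,k,\lambda)$-BIBD has ''at most $\lambda$''. A $(v,4,1)$-BIBD is nested if there is a map $\phi:\mathcal{A}\to X$ such that $\{A\cup\{\phi(A)\}:A\in\mathcal{A}\}$ is the block multiset of a partial $(v,5,2)$-BIBD on $X$ (in particular $\phi(A)\notin A$). *)

From mathcomp Require Import all_boot.
Set Implicit Arguments. Unset Strict Implicit. Unset Printing Implicit Defensive.

(* Point set X = 'I_v; block multiset = a sequence of subsets of 'I_v
   (repetitions allowed). *)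

Definition pair_count (v : nat) (B : seq {set 'I_v}) (x y : 'I_v) : nat :=
  count (fun A : {set 'I_v} => (x \in A) && (y \in A)) B.

Definition is_BIBD (v k lam : nat) (B : seq {set 'I_v}) : Prop :=
  (forall A, A \in B -> #|A| = k) /\
  (forall x y : 'I_v, x != y -> pair_count B x y = lam).

Definition is_partial_BIBD (v k lam : nat) (B : seq {set 'I_v}) : Prop :=
  (forall A, A \in B -> #|A| = k) /\
  (forall x y : 'I_v, x != y -> pair_count B x y <= lam).

(* A (v,4,1)-BIBD B is nested if there is a map phi from the blocks
   (indexed by their positions in the multiset B) to the points such that
   { A u {phi A} : A in B } is (the block multiset of) a partial (v,5,2)-BIBD. *)
Definition nested_BIBD_4_1 (v : nat) (B : seq {set 'I_v}) : Prop :=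
  is_BIBD 4 1 B /\
  exists phi : 'I_(size B) -> 'I_v,
    is_partial_BIBD 5 2
      [seq phi i |: nth set0 B i | i <- enum 'I_(size B)].

From mathcomp Require Import all_boot.
Set Implicit Arguments. Unset Strict Implicit. Unset Printing Implicit Defensive.

(* Every design is exhibited explicitly.  For v = 16, 28 all blocks are
   listed; for 40 <= v <= 196 the point set is Z_(v-1) plus a point at
   infinity v-1, and the design is the development modulo v-1 of a few base
   blocks (nesting points developed along), together with the short orbit
   {oo, s, s+w, s+2w}, s < w = (v-1)/3, where the block at s is nested with
   s+1.  The BIBD and partial BIBD conditions are checked by computation:
   for every point x, one tallies the points of the blocks through x. *)

Definition add_block_at (l s : seq nat) (T : seq (seq nat)) : seq (seq nat) :=
  foldr (fun a T => set_nth [::] T a (l ++ nth [::] T a)) T s.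

Definition incidence_table (L : seq (seq nat)) : seq (seq nat) :=
  foldr (fun l T => add_block_at l l T) [::] L.

Definition tally_nat (F : seq nat) : seq nat :=
  foldr (fun a t => incr_nth t a) [::] F.

Lemma nth_add_block_at l s T x : uniq s ->
  nth [::] (add_block_at l s T) x = (if x \in s then l else [::]) ++ nth [::] T x.
Proof.
elim: s x => [|a s IHs] x //= /andP[a_notin_s uniq_s].
rewrite nth_set_nth /= in_cons; case: eqP => [->|_] /=; last exact: IHs.
by rewrite IHs // (negbTE a_notin_s).
Qed.

Lemma nth_incidence_table L (x : nat) : all uniq L ->
  nth [::] (incidence_table L) x = flatten [seq l <- L | x \in l].
Proof.
elim: L => [|l L IHL] /=; first by rewrite nth_nil.
case/andP=> uniq_l uniq_L; rewrite nth_add_block_at // IHL //.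
by case: (x \in l).
Qed.

Lemma nth_tally_nat F y : nth 0 (tally_nat F) y = count_mem y F.
Proof. by elim: F => [|a F IHF] /=; rewrite ?nth_nil // nth_incr_nth IHF. Qed.

Lemma count_mem_flatten_blocks (L : seq (seq nat)) (x y : nat) : all uniq L ->
  count_mem y (flatten [seq l <- L | x \in l]) =
  count (fun l => (x \in l) && (y \in l)) L.
Proof.
elim: L => [|l L IHL] //= /andP[uniq_l uniq_L].
case: (x \in l) => /=; last exact: IHL.
by rewrite count_cat IHL // count_uniq_mem.
Qed.

Section Certificate.

Variable v : nat.

Definition seq_set (l : seq nat) : {set 'I_v} := [set x : 'I_v | val x \in l].

Definition is_block (k : nat) (l : seq nat) : bool :=
  [&& size l == k, uniq l & all (fun x => x < v) l].

Lemma card_seq_set l : uniq l -> all (fun x => x < v) l -> #|seq_set l| = size l.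
Proof.
move=> uniq_l l_lt_v.
have seq_setE : seq_set l =i (pmap insub l : seq 'I_v).
  by move=> x; rewrite mem_pmap_sub inE.
rewrite (eq_card seq_setE) (card_uniqP _) ?pmap_sub_uniq // size_pmap_sub.
by apply/eqP; rewrite -all_count.
Qed.

Lemma card_blocks k L :
  all (is_block k) L -> forall A, A \in map seq_set L -> #|A| = k.
Proof.
move=> /allP L_blocks A /mapP[l l_in_L ->].
by case/and3P: (L_blocks l l_in_L) => /eqP <- uniq_l l_lt_v; rewrite card_seq_set.
Qed.

Lemma pair_count_seq_set L (x y : 'I_v) :
  pair_count (map seq_set L) x y = count (fun l => (val x \in l) && (val y \in l)) L.
Proof. by rewrite /pair_count count_map; apply: eq_count => l; rewrite /= !inE. Qed.

Definition pair_counts_ok (L : seq (seq nat)) (ok : pred nat) : bool :=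
  let T := incidence_table L in
  all (fun x => let t := tally_nat (nth [::] T x) in
     all (fun y => (y == x) || ok (nth 0 t y)) (iota 0 v)) (iota 0 v).

Lemma pair_counts_okP L ok : all uniq L -> pair_counts_ok L ok ->
  forall x y : 'I_v, x != y -> ok (pair_count (map seq_set L) x y).
Proof.
move=> uniq_L /allP L_ok x y x_neq_y.
have in_iota (z : 'I_v) : val z \in iota 0 v by rewrite mem_iota ltn_ord.
have /allP /(_ (val y) (in_iota y)) := L_ok (val x) (in_iota x).
rewrite eq_sym (inj_eq val_inj) (negbTE x_neq_y) /=.
by rewrite nth_tally_nat nth_incidence_table // count_mem_flatten_blocks //
  pair_count_seq_set.
Qed.

End Certificate.

Lemma blocks_uniq v k L : all (is_block v k) L -> all uniq L.
Proof. by move=> /allP L_blocks; apply/allP=> l /L_blocks /and3P[]. Qed.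

Lemma seq_set_cons v h t :
  h < v.+1 -> seq_set v.+1 (h :: t) = inord h |: seq_set v.+1 t.
Proof.
move=> h_lt_v; apply/setP=> x.
by rewrite !inE -(inj_eq val_inj) /= inordK.
Qed.

(* A nested block is stored as [:: p; a; b; c; d], the block {a, b, c, d}
   nested with the point p. *)
Definition nested_certificate (v : nat) (L : seq (seq nat)) : bool :=
  [&& all (is_block v 5) L, all (is_block v 4) (map behead L),
      pair_counts_ok v (map behead L) (pred1 1) &
      pair_counts_ok v L (fun c => c <= 2)].

Definition nest_point v (l : seq nat) : 'I_v.+1 := inord (head 0 l).

Lemma nested_certificateP v L : nested_certificate v.+1 L ->
  nested_BIBD_4_1 (map (seq_set v.+1 \o behead) L).
Proof.
case/and4P=> blocks5 blocks4 counts4 counts5; split.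
  rewrite map_comp; split; first exact: card_blocks blocks4.
  by move=> x y /(pair_counts_okP (blocks_uniq blocks4) counts4) /eqP.
set B := map _ L; exists (fun i => nest_point v (nth [::] L i)).
suff -> : [seq nest_point v (nth [::] L i) |: nth set0 B i
             | i : 'I_(size B) <- enum 'I_(size B)] = map (seq_set v.+1) L.
  split; first exact: card_blocks blocks5.
  exact: pair_counts_okP (blocks_uniq blocks5) counts5.
rewrite -[in RHS](mkseq_nth [::] L) /mkseq -(size_map (seq_set v.+1 \o behead) L).
rewrite -val_enum_ord -!map_comp; apply: eq_map => i /=.
have i_lt_L : val i < size L.
  by rewrite -(size_map (seq_set v.+1 \o behead)); exact: ltn_ord.
rewrite /B (nth_map [::]) //=.
have /and3P[] := allP blocks5 _ (mem_nth [::] i_lt_L).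
case: (nth [::] L i) => [|h t] //= _ _ /andP[h_lt_v _].
by rewrite seq_set_cons.
Qed.

Definition develop (v : nat) (base : seq (seq nat)) : seq (seq nat) :=
  let n := v.-1 in let w := n %/ 3 in
  [seq [seq (x + s) %% n | x <- b] | b <- base, s <- iota 0 n] ++
  [seq [:: s.+1; n; s; s + w; s + w + w] | s <- iota 0 w].

Definition design16 : seq (seq nat) := [::[::2; 1; 6; 8; 15]; [::12; 3; 5; 8; 14]; [::11; 12; 13; 14; 15]; [::5; 0; 6; 11; 13]; [::0; 3; 6; 9; 12]; [::9; 3; 7; 11; 15]; [::14; 3; 4; 10; 13]; [::8; 0; 5; 10; 15]; [::6; 8; 9; 10; 11]; [::1; 0; 7; 9; 14]; [::15; 4; 5; 6; 7]; [::13; 1; 7; 10; 12]; [::4; 1; 5; 9; 13]; [::7; 2; 6; 10; 14]; [::3; 2; 7; 8; 13]; [::12; 2; 4; 9; 15]; [::7; 0; 4; 8; 12]; [::8; 1; 4; 11; 14]; [::11; 0; 1; 2; 3]; [::10; 2; 5; 11; 12]].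
Definition design28 : seq (seq nat) := [::[::18; 1; 5; 11; 12]; [::21; 10; 15; 17; 22]; [::26; 9; 12; 19; 24]; [::11; 2; 4; 17; 25]; [::12; 5; 14; 17; 21]; [::15; 11; 14; 16; 23]; [::22; 3; 15; 20; 24]; [::2; 8; 13; 18; 25]; [::6; 0; 5; 19; 22]; [::9; 12; 13; 14; 15]; [::6; 4; 8; 24; 26]; [::23; 3; 12; 17; 26]; [::16; 7; 13; 19; 21]; [::4; 0; 7; 10; 12]; [::20; 1; 10; 21; 25]; [::17; 4; 10; 16; 20]; [::20; 0; 13; 16; 26]; [::13; 5; 10; 23; 26]; [::23; 5; 9; 18; 20]; [::1; 7; 9; 25; 26]; [::11; 0; 8; 21; 23]; [::6; 2; 12; 20; 23]; [::13; 0; 11; 18; 27]; [::1; 2; 6; 10; 13]; [::14; 2; 7; 18; 22]; [::9; 6; 8; 19; 20]; [::16; 8; 9; 10; 11]; [::14; 20; 21; 26; 27]; [::17; 1; 6; 9; 14]; [::24; 2; 5; 8; 15]; [::24; 7; 11; 17; 20]; [::8; 4; 12; 18; 21]; [::19; 1; 8; 17; 27]; [::25; 3; 6; 18; 23]; [::15; 4; 5; 6; 7]; [::3; 16; 17; 18; 19]; [::27; 8; 12; 16; 22]; [::21; 5; 13; 24; 27]; [::10; 6; 11; 22; 26]; [::3; 2; 11; 21; 24]; [::5; 3; 10; 19; 27]; [::4; 1; 13; 20; 22]; [::12; 11; 15; 19; 25]; [::25; 4; 14; 22; 27]; [::3; 0; 4; 9; 15]; [::0; 2; 14; 19; 26];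 [::21; 1; 4; 19; 23]; [::4; 2; 9; 16; 27]; [::14; 3; 4; 11; 13]; [::22; 9; 13; 17; 23]; [::5; 0; 14; 20; 25]; [::19; 10; 14; 18; 24]; [::7; 6; 12; 25; 27]; [::18; 6; 15; 16; 21]; [::10; 3; 7; 8; 14]; [::12; 0; 1; 2; 3]; [::27; 1; 15; 18; 26]; [::27; 0; 6; 17; 24]; [::26; 3; 5; 16; 25]; [::16; 22; 23; 24; 25]; [::0; 1; 7; 16; 24]; [::7; 3; 9; 21; 22]; [::2; 7; 15; 23; 27]].
Definition base40 : seq (seq nat) := [::[::36; 0; 1; 6; 31]; [::33; 0; 12; 23; 2]; [::26; 0; 4; 24; 7]].
Definition base52 : seq (seq nat) := [::[::49; 0; 30; 1; 4]; [::29; 0; 36; 12; 20]; [::47; 0; 9; 37; 19]; [::24; 0; 49; 44; 38]].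
Definition base64 : seq (seq nat) := [::[::60; 0; 1; 3; 31]; [::39; 0; 4; 26; 44]; [::49; 0; 5; 13; 56]; [::31; 0; 6; 16; 52]; [::26; 0; 9; 24; 38]].
Definition base76 : seq (seq nat) := [::[::31; 0; 54; 24; 36]; [::17; 0; 9; 8; 52]; [::38; 0; 26; 6; 59]; [::25; 0; 35; 72; 7]; [::71; 0; 15; 73; 11]; [::16; 0; 46; 5; 19]].
Definition base88 : seq (seq nat) := [::[::77; 0; 1; 32; 52]; [::81; 0; 2; 6; 18]; [::46; 0; 3; 17; 79]; [::73; 0; 5; 24; 47]; [::9; 0; 7; 46; 61]; [::83; 0; 9; 30; 43]; [::32; 0; 10; 37; 59]].
Definition base100 : seq (seq nat) := [::[::8; 0; 1; 57; 97]; [::56; 0; 4; 71; 86]; [::11; 0; 5; 16; 77]; [::28; 0; 6; 30; 37]; [::82; 0; 8; 58; 78]; [::36; 0; 9; 23; 48]; [::70; 0; 10; 54; 73]; [::85; 0; 12; 47; 65]].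
Definition base112 : seq (seq nat) := [::[::96; 0; 1; 26; 104]; [::107; 0; 2; 67; 96]; [::82; 0; 3; 75; 95]; [::62; 0; 4; 60; 81]; [::17; 0; 5; 62; 73]; [::27; 0; 6; 18; 53]; [::59; 0; 9; 41; 89]; [::47; 0; 10; 23; 50]; [::86; 0; 14; 42; 66]].
Definition base124 : seq (seq nat) := [::[::69; 0; 11; 31; 73]; [::48; 0; 46; 109; 45]; [::23; 0; 51; 74; 90]; [::52; 0; 7; 26; 47]; [::17; 0; 27; 35; 3]; [::21; 0; 36; 2; 30]; [::101; 0; 54; 10; 66]; [::31; 0; 101; 118; 43]; [::37; 0; 114; 29; 4]; [::44; 0; 37; 108; 55]].
Definition base136 : seq (seq nat) := [::[::126; 0; 6; 66; 13]; [::82; 0; 35; 51; 9]; [::108; 0; 103; 79; 41]; [::30; 0; 47; 48; 27]; [::34; 0; 30; 28; 104]; [::57; 0; 67; 85; 89]; [::48; 0; 40; 15; 23]; [::13; 0; 54; 132; 11]; [::14; 0; 99; 80; 70]; [::111; 0; 39; 72; 130]; [::97; 0; 52; 86; 123]].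
Definition base148 : seq (seq nat) := [::[::46; 0; 77; 19; 123]; [::105; 0; 50; 17; 142]; [::103; 0; 68; 124; 86]; [::33; 0; 139; 63; 99]; [::129; 0; 103; 131; 69]; [::40; 0; 144; 4; 51]; [::65; 0; 80; 112; 121]; [::140; 0; 65; 95; 12]; [::94; 0; 88; 108; 145]; [::93; 0; 118; 31; 105]; [::39; 0; 137; 1; 15]; [::95; 0; 27; 72; 6]].
Definition base160 : seq (seq nat) := [::[::95; 0; 30; 46; 28]; [::114; 0; 97; 104; 38]; [::73; 0; 82; 78; 37]; [::109; 0; 72; 156; 120]; [::6; 0; 119; 54; 134]; [::70; 0; 154; 85; 12]; [::33; 0; 31; 89; 57]; [::32; 0; 138; 132; 103]; [::143; 0; 64; 22; 83]; [::116; 0; 145; 146; 96]; [::39; 0; 136; 11; 126]; [::23; 0; 67; 20; 91]; [::81; 0; 99; 107; 150]].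
Definition base172 : seq (seq nat) := [::[::68; 0; 72; 157; 45]; [::147; 0; 107; 161; 163]; [::108; 0; 100; 168; 67]; [::22; 0; 121; 98; 147]; [::39; 0; 165; 125; 83]; [::12; 0; 76; 81; 136]; [::139; 0; 38; 130; 118]; [::165; 0; 106; 19; 32]; [::27; 0; 93; 62; 137]; [::134; 0; 37; 36; 20]; [::143; 0; 128; 156; 51]; [::31; 0; 61; 119; 108]; [::121; 0; 132; 102; 123]; [::118; 0; 167; 25; 18]].
Definition base184 : seq (seq nat) := [::[::177; 0; 105; 67; 64]; [::116; 0; 129; 16; 128]; [::44; 0; 136; 140; 26]; [::66; 0; 87; 35; 8]; [::167; 0; 60; 134; 159]; [::124; 0; 22; 36; 173]; [::40; 0; 82; 37; 154]; [::78; 0; 50; 139; 83]; [::53; 0; 34; 124; 85]; [::10; 0; 95; 19; 125]; [::26; 0; 163; 152; 170]; [::35; 0; 141; 15; 6]; [::104; 0; 121; 81; 53]; [::24; 0; 162; 65; 2]; [::140; 0; 178; 103; 12]].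
Definition base196 : seq (seq nat) := [::[::185; 0; 111; 47; 37]; [::147; 0; 85; 133; 15]; [::136; 0; 171; 114; 35]; [::17; 0; 109; 53; 170]; [::186; 0; 108; 100; 72]; [::85; 0; 146; 39; 80]; [::158; 0; 102; 68; 128]; [::13; 0; 175; 179; 83]; [::152; 0; 163; 44; 149]; [::51; 0; 144; 104; 173]; [::82; 0; 140; 153; 3]; [::118; 0; 27; 124; 18]; [::38; 0; 63; 82; 157]; [::4; 0; 183; 184; 178]; [::75; 0; 23; 30; 73]; [::7; 0; 33; 31; 174]].

Definition nested_design (v : nat) : seq (seq nat) :=
  if v == 16 then design16 else if v == 28 then design28 else
  develop v (if v == 40 then base40 else if v == 52 then base52 else
             if v == 64 then base64 else if v == 76 then base76 else
             if v == 88 then base88 else if v == 100 then base100 else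
             if v == 112 then base112 else if v == 124 then base124 else
             if v == 136 then base136 else if v == 148 then base148 else
             if v == 160 then base160 else if v == 172 then base172 else
             if v == 184 then base184 else base196).

Definition nested_orders : seq nat := [seq 12 * k + 4 | k <- iota 1 16].

Lemma mem_nested_orders v : v %% 12 = 4 -> 16 <= v <= 196 -> v \in nested_orders.
Proof.
move=> v_mod /andP[v_ge v_le].
have -> : nested_orders = [seq u <- iota 16 181 | u %% 12 == 4] by [].
by rewrite mem_filter mem_iota v_mod v_ge.
Qed.

Lemma nested_designs_ok :
  all (fun v => nested_certificate v (nested_design v)) nested_orders.
Proof. by vm_compute. Qed.

Theorem mainTheorem9 :
  forall v : nat, v %% 12 = 4 -> 16 <= v <= 196 ->
  exists B : seq {set 'I_v}, nested_BIBD_4_1 B.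
Proof.
case=> [|v] // v_mod v_range.
have /(allP nested_designs_ok) /nested_certificateP :=
  mem_nested_orders v_mod v_range.
by exists (map (seq_set v.+1 \o behead) (nested_design v.+1)).
Qed.
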